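(* Let $m\ge 1$ be a fixed integer and $c>\frac{1}{m}$ a fixed constant, and let $T$ be the total population of the $m$-fold Poisson branching process $T^{po}_{m,c}$. Then there exists a positive constant $C=C(m,c)$ such that for every positive integer $K$, $$\Pr(T=K)<e^{-CK}.$$
   Context: An $m$-fold Poisson random variable with parameter $c$ is a random variable $Z$ with $\Pr(Z=k)=e^{-c}\frac{c^{k/m}}{(k/m)!}$ if $m\mid k$ and $\Pr(Z=k)=0$ otherwise ($k\ge 0$); i.e. $m$ times a Poisson$(c)$ variable. The $m$-fold Poisson branching process $T^{po}_{m,c}$ is the Galton–Watson process $Y_0=1$, $Y_t=Y_{t-1}-1+Z_t$ for $t\ge1$, where $Z_1,Z_2,\dots$ are i.i.d. $m$-fold Poisson variables with parameter $c$. Its total population $T$ is the least $t$ with $Y_t=0$ (the total number of nodes created, including the root), with $T=\infty$ if no such $t$ exists. *)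

From HB Require Import structures.
From mathcomp Require Import all_boot all_order all_algebra.
From mathcomp Require Import all_classical all_reals all_analysis.
Set Implicit Arguments. Unset Strict Implicit. Unset Printing Implicit Defensive.
Import Order.TTheory GRing.Theory Num.Theory.
Local Open Scope ring_scope.
Local Open Scope classical_set_scope.

Definition mpois_pmf (R : realType) (m : nat) (c : R) (k : nat) : R :=
  if (m %| k)%N then expR (- c) * c ^+ (k %/ m) / ((k %/ m)`!)%:R else 0.

(* Y_t = 1 + Z_1 + ... + Z_t - t, for outcomes z with z i = Z_{i+1}. *)
Definition walkY (K : nat) (z : {ffun 'I_K -> nat}) (t : nat) : int :=
  1 + (\sum_(i < K | (i < t)%N) (z i)%:Z) - t%:Z.

(* The event {T = K}: Y_t <> 0 for all t < K, and Y_K = 0 (it depends only on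
   Z_1, ..., Z_K). *)
Definition hitsAt (K : nat) (z : {ffun 'I_K -> nat}) : Prop :=
  (forall t : nat, (t < K)%N -> walkY z t <> 0) /\ walkY z K = 0.

(* Pr(T = K): the (product) law of the i.i.d. vector (Z_1,...,Z_K), summed
   over the (countable) event {T = K}. *)
Definition PrT (R : realType) (m : nat) (c : R) (K : nat) : \bar R :=
  \esum_(z in [set z : {ffun 'I_K -> nat} | hitsAt z])
     (\prod_(i < K) mpois_pmf m c (z i))%:E.

(* A Chernoff bound.  On the event {T = K} the walk steps satisfy
   Z_1 + ... + Z_K = K - 1 and every Z_i < K, so for any s > 0 weighting each
   path by s^(Z_1 + ... + Z_K - (K - 1)) = 1 gives
   Pr(T = K) <= s^(1-K) g(s)^K,  with g(s) = E s^Z = exp(c (s^m - 1)).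
   Since g(1) = 1 and g'(1) = mc > 1, some s < 1 has g(s) < s, and then
   Pr(T = K) <= s (g(s)/s)^K decays exponentially. *)

From HB Require Import structures.
From mathcomp Require Import all_boot all_order all_algebra.
From mathcomp Require Import all_classical all_reals all_analysis.
From mathcomp Require Import ring lra zify.
Set Implicit Arguments. Unset Strict Implicit. Unset Printing Implicit Defensive.
Import Order.TTheory GRing.Theory Num.Theory.
Local Open Scope ring_scope.
Local Open Scope classical_set_scope.

Lemma expR_ge_partial_sum (R : realType) (x : R) (n : nat) : 0 <= x ->
  \sum_(0 <= j < n) x ^+ j / j`!%:R <= expR x.
Proof.
move=> x_ge0; apply: nondecreasing_cvgn_le; last exact: is_cvg_series_exp_coeff.
apply: nondecreasing_series => k _ _.
by rewrite /exp_coeff divr_ge0 // exprn_ge0.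
Qed.

Lemma sum_dvdn_le (R : realDomainType) (g : nat -> R) (m n : nat) :
  (0 < m)%N -> (forall j, 0 <= g j) ->
  \sum_(0 <= k < n) (if (m %| k)%N then g (k %/ m)%N else 0) <= \sum_(0 <= j < n) g j.
Proof.
move=> m_gt0 g_ge0; set f := fun k => if (m %| k)%N then g (k %/ m)%N else 0.
have f_ge0 k : 0 <= f k by rewrite /f; case: ifP.
have f_mul : \sum_(0 <= k < n * m) f k = \sum_(0 <= j < n) g j.
  rewrite big_nat_mul; apply: eq_big_nat => j _.
  rewrite big_ltn; last by rewrite ltn_mul2r m_gt0 ltnSn.
  rewrite /f dvdn_mull // mulnK // big_nat_cond big1 /=; first by rewrite addr0.
  move=> k /andP[/andP[jm_le k_lt] _]; case: ifP => // /dvdnP[q k_eq].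
  by move: jm_le k_lt; rewrite k_eq !ltn_mul2r m_gt0 => /leq_ltn_trans h /h; rewrite ltnn.
rewrite -f_mul [leRHS](@big_cat_nat _ _ _ n) //= ?leq_pmulr //.
by rewrite lerDl sumr_ge0.
Qed.

Definition mpois_pgf (R : realType) (m : nat) (c s : R) : R := expR (c * (s ^+ m - 1)).

Lemma mpois_pmf_ge0 (R : realType) (m : nat) (c : R) (k : nat) :
  0 <= c -> 0 <= mpois_pmf m c k.
Proof.
move=> c_ge0; rewrite /mpois_pmf; case: ifP => // _.
by rewrite !mulr_ge0 ?expR_ge0 ?exprn_ge0 ?invr_ge0.
Qed.

Lemma mpois_pgf_ge_partial_sum (R : realType) (m : nat) (c s : R) (n : nat) :
  (0 < m)%N -> 0 <= c -> 0 <= s ->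
  \sum_(0 <= k < n) s ^+ k * mpois_pmf m c k <= mpois_pgf m c s.
Proof.
move=> m_gt0 c_ge0 s_ge0; set g := fun j => (c * s ^+ m) ^+ j / j`!%:R.
have g_ge0 j : 0 <= g j by rewrite divr_ge0 // exprn_ge0 // mulr_ge0 // exprn_ge0.
have termE k : s ^+ k * mpois_pmf m c k =
    expR (- c) * (if (m %| k)%N then g (k %/ m)%N else 0).
  rewrite /mpois_pmf /g; case: ifP => [/divnK k_eq|_]; last by rewrite !mulr0.
  by rewrite -{1}k_eq mulnC exprM exprMn; ring.
rewrite (eq_bigr _ (fun k _ => termE k)) -mulr_sumr /mpois_pgf.
rewrite mulrBr mulr1 addrC expRD ler_wpM2l ?expR_ge0 //.
apply: le_trans (sum_dvdn_le n m_gt0 g_ge0) _.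
exact/expR_ge_partial_sum/mulr_ge0/exprn_ge0.
Qed.

Lemma bernoulli_expr1B (R : realFieldType) (e : R) (n : nat) :
  0 <= e <= 1 -> (1 - e) ^+ n * (1 + n%:R * e) <= 1.
Proof.
move=> /andP[e_ge0 e_le1]; elim: n => [|n IHn]; first by rewrite expr0 mul0r addr0 mulr1.
have p_ge0 : 0 <= (1 - e) ^+ n by rewrite exprn_ge0 // subr_ge0.
have loss : 0 <= (1 - e) ^+ n * (e * e) * (n%:R + 1) by rewrite !mulr_ge0 // addr_ge0.
rewrite exprS -mulrA -addn1 natrD.
have -> : (1 - e) * ((1 - e) ^+ n * (1 + (n%:R + 1%:R) * e)) =
  (1 - e) ^+ n * (1 + n%:R * e) - (1 - e) ^+ n * (e * e) * (n%:R + 1) by ring.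
lra.
Qed.

Lemma mpois_pgf_lt_id (R : realType) (m : nat) (c : R) :
  (1 <= m)%N -> (m%:R)^-1 < c -> exists2 s : R, 0 < s < 1 & mpois_pgf m c s < s.
Proof.
move=> m_ge1 c_gt; set M : R := m%:R.
have M_ge1 : 1 <= M by rewrite ler1n.
have cM_gt1 : 1 < c * M by rewrite -ltr_pdivrMr ?mul1r // (lt_le_trans ltr01).
have c_gt0 : 0 < c by nra.
(* Any 0 < e < 1 with e (c M + M) < c M - 1 works for s := 1 - e. *)
set e := (c * M - 1) / (2 * (c * M + M)).
have eE : e * (2 * (c * M + M)) = c * M - 1 by rewrite /e divfK // gt_eqF //; nra.
have e_gt0 : 0 < e by rewrite /e divr_gt0 // ?subr_gt0 //; nra.
have e_lt : e < 1 / 2 by nra.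
exists (1 - e); first by apply/andP; split; lra.
have e_01 : 0 <= e <= 1 by apply/andP; split; lra.
have := bernoulli_expr1B m e_01; rewrite -/M; set t := (1 - e) ^+ m => t_le.
rewrite /mpois_pgf -/t; set u := 1 - t.
have u_ge : M * e <= u * (1 + M * e) by rewrite /u mulrBl mul1r; lra.
have -> : c * (t - 1) = - (c * u) by rewrite /u; ring.
rewrite expRN -[X in X < _]div1r ltr_pdivrMr ?expR_gt0 //.
apply: lt_le_trans (ler_wpM2l _ (expR_ge1Dx (c * u))); last lra.
have cu_ge : c * M * e <= c * u * (1 + M * e) by rewrite -!mulrA ler_pM2l.
have margin : e * (1 + M * e) < (1 - e) * (c * M * e).
  have : e * (e * (2 * (c * M + M))) = e * (c * M - 1) by rewrite eE.
  nra.
have : e * (1 + M * e) < ((1 - e) * (c * u)) * (1 + M * e).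
  apply: lt_le_trans margin _; rewrite -[leRHS]mulrA.
  by apply: ler_wpM2l cu_ge; lra.
by rewrite ltr_pM2r; [lra | nra].
Qed.

Lemma walkY_full (K : nat) (z : {ffun 'I_K -> nat}) :
  walkY z K = 1 + (\sum_(i < K) z i)%N%:Z - K%:Z.
Proof.
rewrite /walkY (eq_bigl xpredT) => [|i]; last exact: ltn_ord.
by rewrite -(big_morph Posz PoszD (erefl 0%:Z)).
Qed.

Lemma hitsAt_sum (K : nat) (z : {ffun 'I_K -> nat}) :
  hitsAt z -> (\sum_(i < K) z i).+1 = K.
Proof. by move=> [_]; rewrite walkY_full; lia. Qed.

Lemma hitsAt_lt (K : nat) (z : {ffun 'I_K -> nat}) (i : 'I_K) :
  hitsAt z -> (z i < K)%N.
Proof. by move=> /hitsAt_sum; rewrite (bigD1 i) //=; lia. Qed.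

Lemma esum_le_sum_seq (R : realType) (T : choiceType) (S : set T) (r : seq T)
    (a : T -> R) :
  (forall x, 0 <= a x) -> uniq r -> S `<=` [set` r] ->
  (\esum_(x in S) (a x)%:E <= (\sum_(x <- r) a x)%:E)%E.
Proof.
move=> a_ge0 r_uniq S_sub; apply: ge_ereal_sup => _ [A [A_fin A_sub] <-].
apply: (@le_trans _ _ (\sum_(x \in [set` r]) (a x)%:E)%E).
  apply: lee_fsum_nneg_subset => // [|x _]; last by rewrite lee_fin.
  by move=> x /set_mem /A_sub /S_sub /mem_set.
by rewrite fsumEFin ?finite_seq // -fsbig_seq.
Qed.

Lemma PrT_le_pgf (R : realType) (m : nat) (c s : R) (K : nat) :
  (0 < m)%N -> 0 <= c -> 0 < s ->
  (PrT m c K.+1 <= ((s ^+ K)^-1 * mpois_pgf m c s ^+ K.+1)%:E)%E.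
Proof.
move=> m_gt0 c_ge0 s_gt0; set h := fun k => s ^+ k * mpois_pmf m c k.
have h_ge0 k : 0 <= h k by rewrite mulr_ge0 ?mpois_pmf_ge0 // exprn_ge0 // ltW.
have tilt z : hitsAt z ->
    \prod_(i < K.+1) mpois_pmf m c (z i) = (s ^+ K)^-1 * \prod_(i < K.+1) h (z i).
  move=> /hitsAt_sum [sum_z]; rewrite big_split /= prodrXr sum_z mulKf //.
  by rewrite expf_neq0 // gt_eqF.
set emb := fun w : {ffun 'I_K.+1 -> 'I_K.+1} => [ffun i => val (w i)].
have emb_inj : injective emb.
  by move=> w1 w2 /ffunP eq_w; apply/ffunP => i; apply/val_inj; have := eq_w i; rewrite !ffunE.
rewrite /PrT; under eq_esum => z /tilt -> do [].
apply: le_trans (esum_le_sum_seq (r := map emb (enum {ffun 'I_K.+1 -> 'I_K.+1})) _ _ _) _.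
- move=> z; apply: mulr_ge0; last exact: prodr_ge0.
  by rewrite invr_ge0 exprn_ge0 // ltW.
- by rewrite map_inj_uniq // enum_uniq.
- move=> z hit_z /=; apply/mapP; exists [ffun i => inord (z i)]; first by rewrite mem_enum.
  by apply/ffunP => i; rewrite !ffunE /= inordK // hitsAt_lt.
rewrite (big_map emb) big_enum /= lee_fin -mulr_sumr.
apply: ler_wpM2l; first by rewrite invr_ge0 exprn_ge0 // ltW.
under eq_bigr do under eq_bigr do rewrite ffunE.
rewrite -(bigA_distr_bigA (fun _ (j : 'I_K.+1) => h j)).
rewrite -[in X in _ <= X](card_ord K.+1) -prodr_const.
apply: ler_prod => i _; rewrite sumr_ge0 //= -(big_mkord xpredT h).
exact: mpois_pgf_ge_partial_sum (ltW s_gt0).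
Qed.

Theorem lemma3 (R : realType) (m : nat) (c : R) (hm : (1 <= m)%N)
    (hc : (m%:R)^-1 < c) :
  exists C : R, 0 < C /\
    forall K : nat, (0 < K)%N -> (PrT m c K < (expR (- (C * K%:R)))%:E)%E.
Proof.
have [s /andP[s_gt0 s_lt1] g_lt_s] := mpois_pgf_lt_id hm hc.
have c_ge0 : 0 <= c by apply: le_trans (ltW hc); rewrite invr_ge0.
set q := mpois_pgf m c s / s.
have q_gt0 : 0 < q by rewrite divr_gt0 ?expR_gt0.
have q_lt1 : q < 1 by rewrite ltr_pdivrMr ?mul1r.
exists (- ln q); split; first by rewrite oppr_gt0 ln_lt0 // q_gt0.
case=> // K _; apply: le_lt_trans (PrT_le_pgf K hm c_ge0 s_gt0) _.
have -> : (s ^+ K)^-1 * mpois_pgf m c s ^+ K.+1 = s * q ^+ K.+1.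
  by rewrite /q expr_div_n [s ^+ K.+1]exprS; field; rewrite expf_neq0 // gt_eqF.
rewrite lte_fin mulNr opprK expRM_natr lnK ?posrE //.
by rewrite gtr_pMl // exprn_gt0.
Qed.
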